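(* Let $R>0$ and $\Theta=(\alpha,\rho_r,\rho_d,\rho_s,\rho_0,T)$ with $\alpha>1$, $\rho_r,\rho_d,\rho_s,\rho_0>0$, $T>1$, and with $\beta=\rho_d/\rho_r$, $\delta=\rho_s/\rho_r$, $\mu=\rho_0/\rho_r$ suppose $\min\big(\frac T4,\frac1{3\mu},\frac{3\beta}{2\mu}\big)>10$ and $\rho_r>\frac{\alpha}{2\delta}$. Then $$\frac38\,\zeta'_{csi}\Big(\frac43R,\Theta\Big)<\zeta'_{zf}(R,\Theta)<\zeta'_{csi}(R,\Theta).$$
   Context: $K_{max}(\Theta)=\min\big(\frac T4,\frac{\rho_r}{3\rho_0},\frac{3\rho_d}{2\rho_0}\big)$. For reals $M>K$, $1\le K\le\tau<T$ and rate $r>0$, let $$\gamma_u=\frac{K+\tau}{2\tau(M-K)}\Big(2^{\frac{r}{K(1-\tau/T)}}-1\Big)+\sqrt{\Big(\frac{K+\tau}{2\tau(M-K)}\Big(2^{\frac{r}{K(1-\tau/T)}}-1\Big)\Big)^2+\frac{2^{\frac{r}{K(1-\tau/T)}}-1}{\tau(M-K)}},$$ $$\frac{r}{\zeta_{zf}(M,K,\tau,r,\Theta)}=\alpha K\gamma_u+\rho_s+K\Big(\rho_d+\frac{8K^2\rho_0}{3T}\Big)+M\Big(\rho_r+2K\rho_0+\frac{4K^2\rho_0}{T}\Big).$$ $\zeta'_{zf}(r,\Theta)$ is the supremum of $\zeta_{zf}(M,K,\tau,r,\Theta)$ over real $(M,K,\tau)$ with $1\le K\le K_{max}(\Theta)$,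 $K\le\tau<T$, $M>K$. For real $M>K\ge1$, $\frac{1}{\zeta_{csi}(M,K,r,\Theta)}=\frac1r\big[\frac{\alpha K}{M-K}(2^{r/K}-1)+M\rho_r+K\rho_d+\rho_s\big]$, and $\zeta'_{csi}(r,\Theta)$ is the maximum of $\zeta_{csi}(M,K,r,\Theta)$ over real $(M,K)$ with $1\le K\le K_{max}(\Theta)$, $M>K$. *)

From Stdlib Require Import Reals.
From Coquelicot Require Import Coquelicot.
Open Scope R_scope.

Record Theta := mkTheta {
  alpha : R; rho_r : R; rho_d : R; rho_s : R; rho_0 : R; TT : R }.

Definition Kmax (th : Theta) : R :=
  Rmin (TT th / 4) (Rmin (rho_r th / (3 * rho_0 th)) (3 * rho_d th / (2 * rho_0 th))).

Definition pow2 (x : R) : R := Rpower 2 x.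

Definition gamma_u (th : Theta) (M K tau r : R) : R :=
  let e := pow2 (r / (K * (1 - tau / TT th))) - 1 in
  let a := (K + tau) / (2 * tau * (M - K)) * e in
  a + sqrt (a ^ 2 + e / (tau * (M - K))).

Definition denom_zf (th : Theta) (M K tau r : R) : R :=
  alpha th * K * gamma_u th M K tau r + rho_s th
  + K * (rho_d th + 8 * K ^ 2 * rho_0 th / (3 * TT th))
  + M * (rho_r th + 2 * K * rho_0 th + 4 * K ^ 2 * rho_0 th / TT th).

Definition zeta_zf (th : Theta) (M K tau r : R) : R :=
  r / denom_zf th M K tau r.

Definition zeta_zf' (r : R) (th : Theta) : Rbar :=
  Lub_Rbar (fun z => exists M K tau,
    1 <= K /\ K <= Kmax th /\ K <= tau /\ tau < TT th /\ K < M /\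
    z = zeta_zf th M K tau r).

Definition zeta_csi (th : Theta) (M K r : R) : R :=
  / ((1 / r) * (alpha th * K / (M - K) * (pow2 (r / K) - 1)
                + M * rho_r th + K * rho_d th + rho_s th)).

(* zeta'_csi(r, Theta): the maximum (taken as supremum) over real (M,K)
   with 1 <= K <= Kmax, M > K *)
Definition zeta_csi' (r : R) (th : Theta) : Rbar :=
  Lub_Rbar (fun z => exists M K,
    1 <= K /\ K <= Kmax th /\ K < M /\ z = zeta_csi th M K r).

(** Both bounds compare the denominators [r / zeta].  For every admissible
    [(M, K, tau)], the zero-forcing denominator exceeds the CSI denominator
    [D_csi(M, K, r)] by at least [2 rho_0], since [gamma_u] dominates
    [(2^{r/K} - 1)/(M - K)] and the extra terms contain [2 M K rho_0]; hence
    [zeta'_zf <= r / (r / zeta'_csi + 2 rho_0) < zeta'_csi].  Conversely, with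
    the pilot length [tau = T/4] the exponent becomes [(4/3) r / K], the bound
    [sqrt (a^2 + b) <= a + b / (2 a)] and [K <= K_max] give
    [D_zf(M, K, T/4, r) <= 2 D_csi(M, K, 4r/3) - (rho_s - alpha/2)], and
    choosing [(M, K)] nearly optimal for [zeta'_csi(4r/3)] yields
    [zeta'_zf(r) > 3/8 zeta'_csi(4r/3)] because [rho_s > alpha/2]. *)
From Pilot Require Import Defs.
From Stdlib Require Import Reals Lra Psatz Classical.
From Coquelicot Require Import Coquelicot.
Open Scope R_scope.

Lemma pow2_gt1 x : 0 < x -> 1 < Defs.pow2 x.
Proof.
  intros Hx; unfold Defs.pow2; rewrite <- (Rpower_O 2) by lra.
  apply Rpower_lt; lra.
Qed.

Lemma pow2_le_compat x y : x <= y -> Defs.pow2 x <= Defs.pow2 y.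
Proof. intros Hxy; unfold Defs.pow2; apply Rle_Rpower; lra. Qed.

Lemma sqrt_sqr_add_ge a b : 0 <= a -> 0 <= b -> a <= sqrt (a ^ 2 + b).
Proof.
  intros Ha Hb; rewrite <- (sqrt_pow2 a) at 1 by lra.
  apply sqrt_le_1_alt; lra.
Qed.

Lemma sqrt_sqr_add_le a b : 0 < a -> 0 <= b -> sqrt (a ^ 2 + b) <= a + b / (2 * a).
Proof.
  intros Ha Hb.
  assert (Hq : 0 <= b / (2 * a)) by (apply Rdiv_le_0_compat; lra).
  rewrite <- (sqrt_pow2 (a + b / (2 * a))) by lra.
  apply sqrt_le_1_alt.
  replace ((a + b / (2 * a)) ^ 2) with (a ^ 2 + b + (b / (2 * a)) ^ 2) by (field; lra).
  nra.
Qed.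

Lemma Rdiv_le_contravar_l r x y : 0 <= r -> 0 < x -> x <= y -> r / y <= r / x.
Proof.
  intros Hr Hx Hxy; apply Rmult_le_compat_l; [lra |].
  apply Rinv_le_contravar; lra.
Qed.

Lemma Rdiv_lt_contravar_l r x y : 0 < r -> 0 < x -> x < y -> r / y < r / x.
Proof.
  intros Hr Hx Hxy; apply Rmult_lt_compat_l; [lra |].
  apply Rinv_lt_contravar; nra.
Qed.

Lemma Lub_Rbar_approx (E : R -> Prop) (y : R) :
  Rbar_lt y (Lub_Rbar E) -> exists z, E z /\ y < z.
Proof.
  intros Hy; apply NNPP; intros Hnone.
  assert (Hub : is_ub_Rbar E y).
  { intros z Hz; simpl; apply Rnot_lt_le; intros Hyz; apply Hnone; now exists z. }
  pose proof (proj2 (Lub_Rbar_correct E) _ Hub) as Hle.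
  now apply (Rbar_lt_not_le _ _ Hy).
Qed.

Lemma Lub_Rbar_finite (E : R -> Prop) (x0 B : R) :
  E x0 -> (forall z, E z -> z <= B) -> exists s, Lub_Rbar E = Finite s.
Proof.
  intros Hx0 HB; destruct (Lub_Rbar_correct E) as [Hub Hleast].
  destruct (Lub_Rbar E) as [s| |] eqn:Hs.
  - now exists s.
  - now specialize (Hleast B HB).
  - now specialize (Hub x0 Hx0).
Qed.

Definition denom_csi (th : Theta) (M K r : R) : R :=
  alpha th * K / (M - K) * (Defs.pow2 (r / K) - 1)
  + M * rho_r th + K * rho_d th + rho_s th.

Section Denominators.

Variable th : Theta.
Hypotheses (alpha_gt0 : 0 < alpha th) (rho_r_gt0 : 0 < rho_r th)
  (rho_d_gt0 : 0 < rho_d th) (rho_s_gt0 : 0 < rho_s th)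
  (rho_0_gt0 : 0 < rho_0 th) (TT_gt0 : 0 < TT th).

Lemma Kmax_le K : K <= Kmax th ->
  K <= TT th / 4 /\ 3 * rho_0 th * K <= rho_r th /\ 2 * rho_0 th * K <= 3 * rho_d th.
Proof.
  unfold Kmax; intros HK.
  set (m := Rmin (rho_r th / (3 * rho_0 th)) (3 * rho_d th / (2 * rho_0 th))) in HK.
  assert (HKm : K <= m) by (pose proof (Rmin_r (TT th / 4) m); lra).
  pose proof (Rmin_l (TT th / 4) m).
  pose proof (Rmin_l (rho_r th / (3 * rho_0 th)) (3 * rho_d th / (2 * rho_0 th))).
  pose proof (Rmin_r (rho_r th / (3 * rho_0 th)) (3 * rho_d th / (2 * rho_0 th))).
  unfold m in HKm.
  split; [lra | split].
  - rewrite Rmult_comm; apply Rle_div_r; lra.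
  - rewrite Rmult_comm; apply Rle_div_r; lra.
Qed.

Lemma denom_csi_ge_rho_s M K r : 0 < r -> 0 < K -> K < M -> rho_s th <= denom_csi th M K r.
Proof.
  intros Hr HK HM; unfold denom_csi.
  pose proof (pow2_gt1 (r / K) (Rdiv_lt_0_compat _ _ Hr HK)).
  assert (0 <= alpha th * K / (M - K)) by (apply Rdiv_le_0_compat; nra).
  nra.
Qed.

Lemma zeta_csi_denom M K r : 0 < r -> 0 < K -> K < M ->
  zeta_csi th M K r = r / denom_csi th M K r.
Proof.
  intros Hr HK HM; pose proof (denom_csi_ge_rho_s M K r Hr HK HM).
  unfold zeta_csi; fold (denom_csi th M K r); field; lra.
Qed.

Section Gamma.

Variables (M K tau r : R).
Hypotheses (r_gt0 : 0 < r) (K_gt0 : 0 < K) (K_le_tau : K <= tau)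
  (tau_lt_TT : tau < TT th) (K_lt_M : K < M).

Let q := 1 - tau / TT th.
Let e := Defs.pow2 (r / (K * q)) - 1.
Let a := (K + tau) / (2 * tau * (M - K)) * e.
Let b := e / (tau * (M - K)).

Let q_bounds : 0 < q <= 1.
Proof.
  assert (0 < tau / TT th < 1) by (split; [apply Rdiv_lt_0_compat | apply Rlt_div_l]; lra).
  unfold q; lra.
Qed.

Let e_gt0 : 0 < e.
Proof.
  pose proof q_bounds.
  pose proof (pow2_gt1 (r / (K * q)) ltac:(apply Rdiv_lt_0_compat; nra)).
  unfold e; lra.
Qed.

Let gamma_u_ab : gamma_u th M K tau r = a + sqrt (a ^ 2 + b).
Proof. reflexivity. Qed.

Let two_a : 2 * a = (K + tau) / tau * (e / (M - K)).
Proof. unfold a; field; lra. Qed.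

(* The shortened data phase [1 - tau/T] only makes the zero-forcing exponent larger. *)
Lemma gamma_u_ge : (Defs.pow2 (r / K) - 1) / (M - K) <= gamma_u th M K tau r.
Proof.
  pose proof q_bounds; pose proof e_gt0.
  assert (He : Defs.pow2 (r / K) - 1 <= e).
  { unfold e; apply Rplus_le_compat_r, pow2_le_compat.
    replace (r / K) with (r / (K * q) * q) by (field; lra).
    assert (0 < r / (K * q)) by (apply Rdiv_lt_0_compat; nra).
    nra. }
  assert (Hb : 0 <= b) by (apply Rdiv_le_0_compat; nra).
  assert (Hfrac : 1 <= (K + tau) / tau) by (apply Rle_div_r; lra).
  assert (Hemk : 0 <= e / (M - K)) by (apply Rdiv_le_0_compat; lra).
  assert (Ha : 0 <= a) by (pose proof two_a; nra).
  pose proof (sqrt_sqr_add_ge a b Ha Hb).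
  assert ((Defs.pow2 (r / K) - 1) / (M - K) <= e / (M - K))
    by (apply Rmult_le_compat_r; [left; apply Rinv_0_lt_compat |]; lra).
  pose proof two_a; rewrite gamma_u_ab; nra.
Qed.

Lemma gamma_u_le : gamma_u th M K tau r <= (K + tau) / tau * (e / (M - K)) + / (K + tau).
Proof.
  pose proof e_gt0.
  assert (Ha : 0 < a) by (apply Rmult_lt_0_compat; [apply Rdiv_lt_0_compat |]; nra).
  assert (Hb : 0 <= b) by (apply Rdiv_le_0_compat; nra).
  assert (Hba : b / (2 * a) = / (K + tau)) by (unfold a, b; field; repeat split; lra).
  pose proof (sqrt_sqr_add_le a b Ha Hb).
  rewrite gamma_u_ab; lra.
Qed.

End Gamma.

Lemma denom_zf_ge M K tau r : 0 < r -> 1 <= K -> K <= tau -> tau < TT th -> K < M ->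
  denom_csi th M K r + 2 * rho_0 th <= denom_zf th M K tau r.
Proof.
  intros Hr HK Htau HtauT HM.
  pose proof (gamma_u_ge M K tau r Hr ltac:(lra) Htau HtauT HM) as Hgamma.
  assert (Hcsi : alpha th * K / (M - K) * (Defs.pow2 (r / K) - 1)
                 <= alpha th * K * gamma_u th M K tau r).
  { replace (alpha th * K / (M - K) * (Defs.pow2 (r / K) - 1))
      with (alpha th * K * ((Defs.pow2 (r / K) - 1) / (M - K))) by (field; lra).
    apply Rmult_le_compat_l; nra. }
  unfold denom_zf, denom_csi.
  set (X := 8 * K ^ 2 * rho_0 th / (3 * TT th)).
  set (Y := 4 * K ^ 2 * rho_0 th / TT th).
  assert (0 <= K * X) by (apply Rmult_le_pos; [lra | apply Rdiv_le_0_compat; nra]).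
  assert (0 <= M * Y) by (apply Rmult_le_pos; [lra | apply Rdiv_le_0_compat; nra]).
  assert (1 <= M * K) by nra.
  assert (2 * rho_0 th <= M * (2 * K * rho_0 th)) by nra.
  nra.
Qed.

(* With [tau = T/4] the data phase is [3T/4], whence the exponent [(4/3) r / K]. *)
Lemma denom_zf_quarter_le M K r : 0 < r -> 1 <= K -> K <= Kmax th -> K < M ->
  denom_zf th M K (TT th / 4) r
  <= 2 * denom_csi th M K (4 / 3 * r) - (rho_s th - alpha th / 2).
Proof.
  intros Hr HK HKmax HM.
  destruct (Kmax_le K HKmax) as (HKT & Hrho_r & Hrho_d).
  pose proof (gamma_u_le M K (TT th / 4) r Hr ltac:(lra) HKT ltac:(lra) HM) as Hgamma.
  replace (r / (K * (1 - TT th / 4 / TT th))) with (4 / 3 * r / K) in Hgamma by (field; lra).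
  set (e := Defs.pow2 (4 / 3 * r / K) - 1) in Hgamma.
  assert (He : 0 < e).
  { pose proof (pow2_gt1 (4 / 3 * r / K) ltac:(apply Rdiv_lt_0_compat; lra)); unfold e; lra. }
  assert (Hfrac : (K + TT th / 4) / (TT th / 4) <= 2) by (apply Rle_div_l; lra).
  assert (Hemk : 0 <= e / (M - K)) by (apply Rdiv_le_0_compat; lra).
  assert (HKinv : K * / (K + TT th / 4) <= 1 / 2) by (apply Rle_div_l; lra).
  assert (Hpilot : alpha th * K * gamma_u th M K (TT th / 4) r
                   <= 2 * (alpha th * K / (M - K) * e) + alpha th / 2).
  { replace (alpha th * K / (M - K) * e) with (alpha th * K * (e / (M - K))) by (field; lra).
    assert (Hg : gamma_u th M K (TT th / 4) r <= 2 * (e / (M - K)) + / (K + TT th / 4)) by nra.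
    apply Rmult_le_compat_l with (r := alpha th * K) in Hg; nra. }
  assert (HKTT : K / TT th <= 1 / 4) by (apply Rle_div_l; lra).
  assert (HKrho : 0 <= K * rho_0 th) by nra.
  assert (8 * K ^ 2 * rho_0 th / (3 * TT th) <= rho_d th).
  { replace (8 * K ^ 2 * rho_0 th / (3 * TT th)) with (8 / 3 * (K * rho_0 th) * (K / TT th))
      by (field; lra).
    nra. }
  assert (2 * K * rho_0 th + 4 * K ^ 2 * rho_0 th / TT th <= rho_r th).
  { replace (4 * K ^ 2 * rho_0 th / TT th) with (4 * (K * rho_0 th) * (K / TT th))
      by (field; lra).
    nra. }
  unfold denom_zf, denom_csi; fold e; nra.
Qed.

Lemma zeta_csi'_inf_denom r : 0 < r -> 1 <= Kmax th ->
  exists d, 0 < d /\ zeta_csi' r th = Finite (r / d) /\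
    (forall M K, 1 <= K -> K <= Kmax th -> K < M -> d <= denom_csi th M K r) /\
    (forall eps, 0 < eps -> exists M K,
       1 <= K /\ K <= Kmax th /\ K < M /\ denom_csi th M K r < d + eps).
Proof.
  intros Hr HKmax.
  set (E := fun z => exists M K, 1 <= K /\ K <= Kmax th /\ K < M /\ z = zeta_csi th M K r).
  assert (HE : forall z, E z -> exists M K, 1 <= K /\ K <= Kmax th /\ K < M /\
                 0 < denom_csi th M K r /\ z = r / denom_csi th M K r).
  { intros z (M & K & HK & HKm & HM & ->); exists M, K.
    pose proof (denom_csi_ge_rho_s M K r Hr ltac:(lra) HM).
    repeat split; try lra; apply zeta_csi_denom; lra. }
  assert (HE21 : E (zeta_csi th 2 1 r)) by (exists 2, 1; repeat split; lra).
  destruct (Lub_Rbar_finite E _ (r / rho_s th) HE21) as [s Hs].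
  { intros z Hz; destruct (HE z Hz) as (M & K & HK & _ & HM & HD & ->).
    apply Rdiv_le_contravar_l; [lra | lra |].
    apply denom_csi_ge_rho_s; lra. }
  destruct (Lub_Rbar_correct E) as [Hub _]; rewrite Hs in Hub.
  assert (Hs_pos : 0 < s).
  { destruct (HE _ HE21) as (M & K & _ & _ & _ & HD & Hz).
    specialize (Hub _ HE21); simpl in Hub; rewrite Hz in Hub.
    pose proof (Rdiv_lt_0_compat r _ Hr HD); lra. }
  exists (r / s); split; [apply Rdiv_lt_0_compat; lra | split; [| split]].
  - unfold zeta_csi'; fold E; rewrite Hs; f_equal; field; lra.
  - intros M K HK HKm HM; apply Rnot_lt_le; intros Hlt.
    assert (HEz : E (r / denom_csi th M K r))
      by (exists M, K; repeat split; try lra; symmetry; apply zeta_csi_denom; lra).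
    specialize (Hub _ HEz); simpl in Hub.
    pose proof (denom_csi_ge_rho_s M K r Hr ltac:(lra) HM).
    pose proof (Rdiv_lt_contravar_l r (denom_csi th M K r) _ Hr ltac:(lra) Hlt).
    replace (r / (r / s)) with s in * by (field; lra); lra.
  - intros eps Heps.
    assert (Hy : Rbar_lt (r / (r / s + eps)) (Lub_Rbar E)).
    { rewrite Hs; simpl.
      pose proof (Rdiv_lt_contravar_l r (r / s) (r / s + eps) Hr
                    ltac:(apply Rdiv_lt_0_compat; lra) ltac:(lra)).
      replace (r / (r / s)) with s in * by (field; lra); lra. }
    destruct (Lub_Rbar_approx E _ Hy) as (z & Hz & Hyz).
    destruct (HE z Hz) as (M & K & HK & HKm & HM & HD & ->).
    exists M, K; repeat split; try lra.
    apply Rnot_le_lt; intros Hle.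
    assert (Hpos : 0 < r / s + eps) by (pose proof (Rdiv_lt_0_compat r s Hr Hs_pos); lra).
    pose proof (Rdiv_le_contravar_l r _ _ ltac:(lra) Hpos Hle); lra.
Qed.

Lemma zeta_zf'_lt_zeta_csi' r : 0 < r -> 1 <= Kmax th ->
  Rbar_lt (zeta_zf' r th) (zeta_csi' r th).
Proof.
  intros Hr HKmax.
  destruct (zeta_csi'_inf_denom r Hr HKmax) as (d & Hd & Hcsi & Hinf & _).
  rewrite Hcsi; apply Rbar_le_lt_trans with (Finite (r / (d + 2 * rho_0 th))).
  - apply Lub_Rbar_correct; intros z (M & K & tau & HK & HKm & Htau & HtauT & HM & ->).
    pose proof (Hinf M K HK HKm HM).
    pose proof (denom_zf_ge M K tau r Hr HK Htau HtauT HM).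
    apply Rdiv_le_contravar_l; lra.
  - apply Rdiv_lt_contravar_l; lra.
Qed.

Lemma zeta_csi'_lt_zeta_zf' r : 0 < r -> 1 <= Kmax th -> alpha th / 2 < rho_s th ->
  Rbar_lt (Rbar_mult (3 / 8) (zeta_csi' (4 / 3 * r) th)) (zeta_zf' r th).
Proof.
  intros Hr HKmax Hslack.
  destruct (zeta_csi'_inf_denom (4 / 3 * r) ltac:(lra) HKmax) as (d & Hd & Hcsi & _ & Happrox).
  destruct (Happrox ((rho_s th - alpha th / 2) / 2) ltac:(lra))
    as (M & K & HK & HKm & HM & HD).
  pose proof (denom_zf_quarter_le M K r Hr HK HKm HM) as Hzf.
  destruct (Kmax_le K HKm) as (HKT & _ & _).
  pose proof (denom_zf_ge M K (TT th / 4) r Hr HK HKT ltac:(lra) HM).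
  pose proof (denom_csi_ge_rho_s M K r Hr ltac:(lra) HM).
  rewrite Hcsi; apply Rbar_lt_le_trans with (Finite (zeta_zf th M K (TT th / 4) r)).
  - simpl; replace (3 / 8 * (4 / 3 * r / d)) with (r / (2 * d)) by (field; lra).
    apply Rdiv_lt_contravar_l; lra.
  - apply Lub_Rbar_correct; exists M, K, (TT th / 4); repeat split; lra.
Qed.

End Denominators.

Lemma Kmax_mkTheta a rr rd rs r0 T : 0 < rr -> 0 < r0 ->
  Kmax (mkTheta a rr rd rs r0 T)
  = Rmin (T / 4) (Rmin (1 / (3 * (r0 / rr))) (3 * (rd / rr) / (2 * (r0 / rr)))).
Proof. intros Hrr Hr0; unfold Kmax; simpl; f_equal; f_equal; field; lra. Qed.

Theorem corollary1 (Rr alpha0 rr rd rs r0 T : R) :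
  0 < Rr ->
  1 < alpha0 -> 0 < rr -> 0 < rd -> 0 < rs -> 0 < r0 -> 1 < T ->
  (let beta := rd / rr in let delta := rs / rr in let mu := r0 / rr in
   Rmin (T / 4) (Rmin (1 / (3 * mu)) (3 * beta / (2 * mu))) > 10 /\
   rr > alpha0 / (2 * delta)) ->
  let th := mkTheta alpha0 rr rd rs r0 T in
  Rbar_lt (Rbar_mult (Finite (3 / 8)) (zeta_csi' (4 / 3 * Rr) th)) (zeta_zf' Rr th) /\
  Rbar_lt (zeta_zf' Rr th) (zeta_csi' Rr th).
Proof.
  intros HR Halpha Hrr Hrd Hrs Hr0 HT [HKmin Hrr_large] th; cbv zeta in HKmin, Hrr_large.
  assert (HKmax : 1 <= Kmax th) by (unfold th; rewrite Kmax_mkTheta; lra).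
  assert (Hslack : alpha0 / 2 < rs).
  { replace (alpha0 / (2 * (rs / rr))) with (rr * alpha0 / (2 * rs)) in Hrr_large
      by (field; lra).
    apply Rlt_div_l in Hrr_large; nra. }
  split; [apply zeta_csi'_lt_zeta_zf' | apply zeta_zf'_lt_zeta_csi']; simpl; lra.
Qed.
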